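(* (1) For every $0\le k\le r$, $S^k(0)=(0)\subseteq R_k$. (2) For every $1\le\ell\le r$ and $0\le k\le\ell$, $L^{\ell-k}S^k(0)=J_{\ell,k}(0)\subseteq R_\ell$. (3) For every $1\le\ell\le r$ and $0\le k\le\ell-2$, $S\,L^{\ell-k-1}S^k(0)=L^{\ell-k}S^k(0)$. Here the iterated operators start from the zero ideal of $R_0$.
   Context: Fix a prime $p$ and an integer $r\ge0$. For $0\le k\le r$ let $R_k$ be the commutative ring which is free as a $\mathbb{Z}$-module with basis $X_{k,0},\dots,X_{k,k}$ and multiplication $X_{k,i}X_{k,j}=p^{k-\max(i,j)}X_{k,\min(i,j)}$; thus $X_{k,k}=1$, and an integer $n$ is identified with $nX_{k,k}$. For $0\le k\le\ell\le r$ define: the additive map $\mathrm{ind}^\ell_k:R_k\to R_\ell$, $X_{k,i}\mapsto X_{\ell,i}$; the ring homomorphism $\mathrm{res}^\ell_k:R_\ell\to R_k$, $\mathrm{res}^\ell_k(X_{\ell,i})=p^{\ell-k}X_{k,i}$ if $i\le k$ and $=p^{\ell-i}$ if $i\ge k$; and the multiplicative map $\mathrm{jnd}^\ell_k:R_k\to R_\ell$, $$\mathrm{jnd}^\ell_k\Big(\sum_{i=0}^k m_iX_{k,i}\Big)=m_kX_{\ell,\ell}+\sum_{k\le i<\ell}\frac{m_k^{p^{\ell-i}}-m_k^{p^{\ell-i-1}}}{p^{\ell-i}}X_{\ell,i}+\sum_{0\le i<k}\frac{(\sum_{s=i}^k m_sp^{k-s})^{p^{\ell-k}}-(\sum_{s=i+1}^k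 m_sp^{k-s})^{p^{\ell-k}}}{p^{\ell-i}}X_{\ell,i}$$ ($m_i\in\mathbb{Z}$). For $1\le k\le r$ and an ideal $I\subseteq R_{k-1}$: $L(I)=(\mathrm{res}^k_{k-1})^{-1}(I)\subseteq R_k$, and $S(I)$ is the ideal of $R_k$ generated by $\mathrm{ind}^k_{k-1}(I)\cup\mathrm{jnd}^k_{k-1}(I)$; $L^n,S^n$ are iterates (each step raising the index by one). For $0\le i\le\ell$, $F_{\ell,i}=X_{\ell,i}-p^{\ell-i}$; for $0\le k\le\ell$ and $x\in\mathbb{Z}$, $J_{\ell,k}(x)\subseteq R_\ell$ is the ideal generated by $x,F_{\ell,k},\dots,F_{\ell,\ell-1}$ if $k\le\ell-1$, and $J_{\ell,\ell}(x)=xR_\ell$. *)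

From mathcomp Require Import all_boot all_algebra.
Set Implicit Arguments. Unset Strict Implicit. Unset Printing Implicit Defensive.
Import GRing.Theory Num.Theory.
Local Open Scope ring_scope.

(* An element of R_k is represented by its coordinate list
   [:: m_0; ...; m_k] (a seq int of size k.+1) in the basis X_{k,0..k}. *)
Definition elt (k : nat) (x : seq int) : Prop := size x = k.+1.

Definition pz (p e : nat) : int := (p ^ e)%N%:Z.

Definition zeroR (k : nat) : seq int := nseq k.+1 0.
Definition addR (k : nat) (x y : seq int) : seq int :=
  mkseq (fun i => x`_i + y`_i) k.+1.
Definition oppR (k : nat) (x : seq int) : seq int :=
  mkseq (fun i => - x`_i) k.+1.
(* X_{k,i} X_{k,j} = p^(k - max(i,j)) X_{k,min(i,j)} *)
Definition mulR (p k : nat) (x y : seq int) : seq int :=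
  mkseq (fun m => \sum_(i < k.+1) \sum_(j < k.+1)
     (if minn i j == m then x`_i * y`_j * pz p (k - maxn i j) else 0)) k.+1.
(* the integer n viewed in R_k, i.e. n X_{k,k} *)
Definition intR (k : nat) (n : int) : seq int :=
  mkseq (fun i => if i == k then n else 0) k.+1.
Definition X (k i : nat) : seq int := mkseq (fun j => (j == i)%:Z) k.+1.

Definition ind (l k : nat) (x : seq int) : seq int :=
  mkseq (fun i => if (i <= k)%N then x`_i else 0) l.+1.

Definition res (p l k : nat) (x : seq int) : seq int :=
  mkseq (fun j => if (j < k)%N then pz p (l - k) * x`_j
                  else if j == k then \sum_(k <= i < l.+1) pz p (l - i) * x`_i
                  else 0) k.+1.

Definition psum (p k i : nat) (x : seq int) : int :=
  \sum_(i <= s < k.+1) x`_s * pz p (k - s).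

(* jnd^l_k, with the (exact) divisions written as integer divisions *)
Definition jnd (p l k : nat) (x : seq int) : seq int :=
  mkseq (fun i =>
    if i == l then x`_k
    else if (k <= i)%N then
      ((x`_k ^+ (p ^ (l - i)) - x`_k ^+ (p ^ (l - i - 1))) %/ pz p (l - i))%Z
    else
      ((psum p k i x ^+ (p ^ (l - k)) - psum p k i.+1 x ^+ (p ^ (l - k)))
         %/ pz p (l - i))%Z) l.+1.

Definition is_ideal (p k : nat) (I : seq int -> Prop) : Prop :=
  [/\ forall x, I x -> elt k x,
      I (zeroR k),
      forall x y, I x -> I y -> I (addR k x y),
      forall x, I x -> I (oppR k x) &
      forall r x, elt k r -> I x -> I (mulR p k r x)].

Definition gen (p k : nat) (A : seq int -> Prop) : seq int -> Prop :=
  fun x => forall J, is_ideal p k J -> (forall a, A a -> J a) -> J x.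

Definition zero_ideal0 : seq int -> Prop := fun x => x = zeroR 0.

Definition Lop (p k : nat) (I : seq int -> Prop) : seq int -> Prop :=
  fun x => elt k.+1 x /\ I (res p k.+1 k x).
Definition Sop (p k : nat) (I : seq int -> Prop) : seq int -> Prop :=
  gen p k.+1 (fun y => exists2 a, I a &
                  y = ind k.+1 k a \/ y = jnd p k.+1 k a).

Fixpoint Siter (p n : nat) : seq int -> Prop :=
  match n with
  | 0 => zero_ideal0
  | n'.+1 => Sop p n' (Siter p n')
  end.

Fixpoint Liter (p n k : nat) (I : seq int -> Prop) : seq int -> Prop :=
  match n with
  | 0 => I
  | n'.+1 => Lop p (k + n') (Liter p n' k I)
  end.

Definition F (p l i : nat) : seq int := addR l (X l i) (oppR l (intR l (pz p (l - i)))).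

Definition Jid (p l k : nat) (x : int) : seq int -> Prop :=
  if (k <= l.-1)%N && (0 < l)%N then
    gen p l (fun y => y = intR l x \/ exists2 i : nat, (k <= i < l)%N & y = F p l i)
  else gen p l (fun y => y = intR l x).

Definition same_ideal (I J : seq int -> Prop) : Prop := forall x, I x <-> J x.

From mathcomp Require Import all_boot all_algebra ring zify.
Import GRing.Theory Num.Theory.
Local Open Scope ring_scope.

(* For i <= l let eps_i : R_l -> Z (psum p l i) send X_{l,s} to p^(l-s) when
   s >= i and to 0 otherwise; each eps_i is a ring homomorphism.  The whole
   proposition is organised around the ideal
       K_{l,k} = { x in R_l | x_i = 0 for i < k, and eps_k(x) = 0 }   (k <= l).
   (1) ind and jnd send 0 to 0, so S^k(0) = (0) by induction.
   (2) eps_k(res x) = eps_k(x) while res multiplies the coordinates below k by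
       p, hence L(K_{m,k}) = K_{m+1,k}; since K_{k,k} = (0), this gives
       L^n S^k(0) = K_{k+n,k}.
   (3) K_{l,k} is generated by F_{l,k}, ..., F_{l,l-1}: these lie in K_{l,k},
       and any x in K_{l,k} is reduced to 0 by subtracting multiples of them
       one coordinate at a time.  Hence J_{l,k}(0) = K_{l,k}.
   (4) S(K_{m,k}) = K_{m+1,k} for k < m: ind and jnd map K_{m,k} into
       K_{m+1,k} because eps_k(ind a) = p eps_k(a) and eps_k(jnd a) = eps_k(a)^p
       (Fermat's little theorem and p | C(p,j) for 0 < j < p); conversely the
       generators F_{m+1,i} are recovered from ind F_{m,i}, jnd F_{m,m-1}. *)

Lemma nth_addR k x y i : (i <= k)%N -> (addR k x y)`_i = x`_i + y`_i.
Proof. by move=> H; rewrite /addR nth_mkseq. Qed.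
Lemma nth_oppR k x i : (i <= k)%N -> (oppR k x)`_i = - x`_i.
Proof. by move=> H; rewrite /oppR nth_mkseq. Qed.
Lemma nth_intR k n i : (i <= k)%N -> (intR k n)`_i = if i == k then n else 0.
Proof. by move=> H; rewrite /intR nth_mkseq. Qed.
Lemma nth_zeroR k i : (zeroR k)`_i = 0.
Proof. by rewrite /zeroR nth_nseq if_same. Qed.
Lemma nth_X k i j : (j <= k)%N -> (X k i)`_j = (j == i)%:Z.
Proof. by move=> H; rewrite /X nth_mkseq. Qed.
Lemma nth_ind l k x i : (i <= l)%N -> (ind l k x)`_i = if (i <= k)%N then x`_i else 0.
Proof. by move=> H; rewrite /ind nth_mkseq. Qed.
Lemma nth_F p l i j : (j <= l)%N ->
  (F p l i)`_j = (j == i)%:Z - (j == l)%:Z * pz p (l - i).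
Proof.
move=> H; rewrite /F nth_addR // nth_X // nth_oppR // nth_intR //.
by case: (j == l); rewrite ?mul1r ?mul0r ?oppr0.
Qed.
Lemma nth_res p l k x j : (j <= k)%N -> (res p l k x)`_j =
  if (j < k)%N then pz p (l - k) * x`_j
  else \sum_(k <= i < l.+1) pz p (l - i) * x`_i.
Proof. by move=> H; rewrite /res nth_mkseq //; case: ltngtP H => // -> _; rewrite eqxx. Qed.
Lemma nth_jnd p l k x i : (i <= l)%N -> (jnd p l k x)`_i =
    if i == l then x`_k
    else if (k <= i)%N then
      ((x`_k ^+ (p ^ (l - i)) - x`_k ^+ (p ^ (l - i - 1))) %/ pz p (l - i))%Z
    else
      ((psum p k i x ^+ (p ^ (l - k)) - psum p k i.+1 x ^+ (p ^ (l - k)))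
         %/ pz p (l - i))%Z.
Proof. by move=> H; rewrite /jnd nth_mkseq. Qed.

Lemma size_addR k x y : size (addR k x y) = k.+1. Proof. by rewrite size_mkseq. Qed.
Lemma size_oppR k x : size (oppR k x) = k.+1. Proof. by rewrite size_mkseq. Qed.
Lemma size_mulR p k x y : size (mulR p k x y) = k.+1. Proof. by rewrite size_mkseq. Qed.
Lemma size_intR k n : size (intR k n) = k.+1. Proof. by rewrite size_mkseq. Qed.
Lemma size_zeroR k : size (zeroR k) = k.+1. Proof. by rewrite size_nseq. Qed.
Lemma size_ind l k x : size (ind l k x) = l.+1. Proof. by rewrite size_mkseq. Qed.
Lemma size_jnd p l k x : size (jnd p l k x) = l.+1. Proof. by rewrite size_mkseq. Qed.
Lemma size_res p l k x : size (res p l k x) = k.+1. Proof. by rewrite size_mkseq. Qed.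
Lemma size_F p l i : size (F p l i) = l.+1. Proof. by rewrite size_mkseq. Qed.

Lemma coord_ext k (x y : seq int) : size x = k.+1 -> size y = k.+1 ->
  (forall i, (i <= k)%N -> x`_i = y`_i) -> x = y.
Proof.
move=> sx sy H; apply: (eq_from_nth (x0 := 0)); first by rewrite sx sy.
by move=> i; rewrite sx ltnS; apply: H.
Qed.

Lemma pzE p e : pz p e = (p%:Z) ^+ e.
Proof. by rewrite /pz -[LHS]natz natrX natz. Qed.
Lemma pz0 p : pz p 0 = 1. Proof. by rewrite pzE expr0. Qed.

(* The maps eps_i = psum p l i. *)

Lemma psum_rec p l i x : (i <= l)%N ->
  psum p l i x = x`_i * pz p (l - i) + psum p l i.+1 x.
Proof. by move=> H; rewrite /psum big_ltn. Qed.

Lemma psum_empty p l i x : (l.+1 <= i)%N -> psum p l i x = 0.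
Proof. by move=> H; rewrite /psum big_geq. Qed.

Lemma psum_at p l x : psum p l l x = x`_l.
Proof. by rewrite psum_rec // psum_empty // subnn pz0 mulr1 addr0. Qed.

Lemma psum_shift p l m k x : (m <= k)%N -> (k <= l.+1)%N ->
  (forall s, (m <= s < k)%N -> x`_s = 0) -> psum p l m x = psum p l k x.
Proof.
move=> h1 h2 H; rewrite /psum (@big_cat_nat _ _ _ k) //=.
by rewrite big1_seq ?add0r // => s; rewrite mem_index_iota => /H ->; rewrite mul0r.
Qed.

Lemma psum_zero p l i : psum p l i (zeroR l) = 0.
Proof. by rewrite /psum big1 // => s _; rewrite nth_zeroR mul0r. Qed.

Lemma psum_addR p l i x y : psum p l i (addR l x y) = psum p l i x + psum p l i y.
Proof.
rewrite /psum -big_split /=; apply: eq_big_nat => s /andP[_ hs].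
by rewrite nth_addR ?mulrDl.
Qed.

Lemma psum_oppR p l i x : psum p l i (oppR l x) = - psum p l i x.
Proof.
rewrite /psum -sumrN /=; apply: eq_big_nat => s /andP[_ hs].
by rewrite nth_oppR ?mulNr.
Qed.

Lemma psum_intR p l i c : (i <= l)%N -> psum p l i (intR l c) = c.
Proof.
move=> il; rewrite (@psum_shift p l i l _ il) // ?psum_at ?nth_intR ?eqxx //.
by move=> s /andP[_ sl]; rewrite nth_intR ?(ltnW sl) ?(ltn_eqF sl).
Qed.

Lemma psum_X p l k i : (k <= i <= l)%N -> psum p l k (X l i) = pz p (l - i).
Proof.
move=> /andP[ki il].
have -> : psum p l k (X l i) = psum p l i (X l i).
  apply: psum_shift => //; first exact: leqW.
  by move=> s /andP[_ hs]; rewrite nth_X ?(ltn_eqF hs) //; apply: ltnW (leq_trans hs il).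
rewrite psum_rec // nth_X // eqxx mul1r.
rewrite (@psum_shift p l i.+1 l.+1) ?psum_empty ?addr0 //.
by move=> s /andP[hs sl]; rewrite nth_X // (gtn_eqF hs).
Qed.

(* Multiplication, coordinatewise: in x*y the coefficient of X_{l,m} collects
   the products X_i X_j with min(i,j) = m, split according to which index
   realises the minimum. *)
Lemma mulR_term (r x : seq int) (p l m i j : nat) :
  (if minn i j == m then r`_i * x`_j * pz p (l - maxn i j) else 0) =
  (if i == m then (if (m <= j)%N then r`_m * (x`_j * pz p (l - j)) else 0) else 0) +
  (if j == m then (if (m < i)%N then x`_m * (r`_i * pz p (l - i)) else 0) else 0).
Proof.
case: (leqP i j) => h.
  have [<-|nim] := eqVneq i m.
    by rewrite h ltnn; case: eqP => _; rewrite addr0 mulrA.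
  rewrite add0r; have [ejm|//] := eqVneq j m.
  by subst j; rewrite ifF //; apply/negbTE; rewrite -leqNgt.
have [<-|_] := eqVneq i m; first by rewrite (ltn_eqF h) leqNgt h addr0.
rewrite add0r; have [<-|//] := eqVneq j m.
by rewrite h mulrCA mulrA.
Qed.

Lemma sum_ord_if (n m : nat) (c : int) : (m < n)%N ->
  \sum_(i < n) (if (i : nat) == m then c else 0) = c.
Proof.
move=> H; rewrite (bigD1 (Ordinal H)) //= eqxx big1 ?addr0 // => i.
by rewrite -val_eqE /= => /negbTE ->.
Qed.

Lemma sum_ord_ge (n m : nat) (f : nat -> int) : (m <= n)%N ->
  \sum_(j < n) (if (m <= j)%N then f j else 0) = \sum_(m <= j < n) f j.
Proof.
move=> H; rewrite -(big_mkord xpredT (fun j => if (m <= j)%N then f j else 0)).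
rewrite (@big_cat_nat _ _ _ m 0 n) //= big1_seq ?add0r; last first.
  by move=> j; rewrite mem_index_iota => /andP[_ /andP[_ hj]]; rewrite leqNgt hj.
by apply: eq_big_nat => j /andP[-> _].
Qed.

Lemma mulR_nth p l r x m : (m <= l)%N ->
  (mulR p l r x)`_m = r`_m * psum p l m x + x`_m * psum p l m.+1 r.
Proof.
move=> Hm; rewrite /mulR nth_mkseq //.
transitivity (\sum_(i < l.+1) ((if (i : nat) == m then r`_m * psum p l m x else 0)
   + (if (m < i)%N then x`_m * (r`_i * pz p (l - i)) else 0))).
  apply: eq_bigr => i _; under eq_bigr do rewrite mulR_term.
  rewrite big_split /= sum_ord_if //.
  have [him|him] := eqVneq (i : nat) m; last by rewrite big1_eq.
  rewrite (@sum_ord_ge l.+1 m (fun j => r`_m * (x`_j * pz p (l - j))) (leqW Hm)).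
  by rewrite /psum -mulr_sumr.
rewrite big_split /= sum_ord_if //.
rewrite (@sum_ord_ge l.+1 m.+1 (fun i => x`_m * (r`_i * pz p (l - i)))) //.
by rewrite /psum -mulr_sumr.
Qed.

(* eps_i is multiplicative; together with psum_addR, psum_oppR and psum_intR
   it is a ring homomorphism R_l -> Z.  Proof by downward induction on i,
   peeling off the coordinate i with mulR_nth. *)
Lemma psum_mul p l r x i : psum p l i (mulR p l r x) = psum p l i r * psum p l i x.
Proof.
case: (leqP i l.+1) => hi; last by rewrite !psum_empty ?mul0r //; apply: ltnW.
move Hd: (l.+1 - i)%N => d; elim: d i Hd hi => [|d IH] i Hd hi.
  have -> : i = l.+1 by apply/eqP; rewrite eqn_leq hi /= -subn_eq0 Hd.
  by rewrite !psum_empty ?mul0r.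
have il : (i <= l)%N by rewrite -ltnS -subn_gt0 Hd.
rewrite (psum_rec p l i _ il) (psum_rec p l i r il) (psum_rec p l i x il).
rewrite IH ?subnS ?Hd // mulR_nth // (psum_rec p l i x il); ring.
Qed.

Lemma nth_mulR_intR p l c y m : (m <= l)%N -> (mulR p l (intR l c) y)`_m = c * y`_m.
Proof.
move=> Hm; rewrite mulR_nth // nth_intR //.
have [->|ne] := eqVneq m l; first by rewrite psum_at psum_empty // mulr0 addr0.
by rewrite mul0r add0r psum_intR 1?mulrC // ltn_neqAle ne Hm.
Qed.

Lemma psum_res p m k x : (k <= m)%N ->
  psum p m k (res p m.+1 m x) = psum p m.+1 k x.
Proof.
move=> H; rewrite /psum big_nat_recr /=; last exact: H.
rewrite big_nat_recr /=; last exact: (leq_trans H (leqnSn m)).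
rewrite big_nat_recr /=; last exact: H.
rewrite nth_res ?leqnn // ltnn subnn pz0 mulr1.
rewrite big_nat_recr /= ?leqnSn // big_nat1 subSnn subnn pz0 mul1r -addrA.
congr (_ + _).
  apply: eq_big_nat => s /andP[_ hs].
  rewrite nth_res ?(ltnW hs) // hs subSnn !pzE (subSn (ltnW hs)) [in RHS]exprS; ring.
by rewrite mulr1 mulrC.
Qed.

Lemma psum_ind p m k a : (k <= m)%N ->
  psum p m.+1 k (ind m.+1 m a) = pz p 1 * psum p m k a.
Proof.
move=> km; rewrite /psum big_nat_recr; last exact: (leq_trans km (leqnSn m)).
rewrite nth_ind // ltnn mul0r /= addr0 mulr_sumr.
apply: eq_big_nat => s /andP[_ hs]; have sm : (s <= m)%N by [].
by rewrite nth_ind ?(leqW sm) // sm !pzE (subSn sm) exprS; ring.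
Qed.

Lemma psum_split2 p m k c : (k <= m)%N ->
  psum p m.+1 k c = \sum_(k <= s < m) c`_s * pz p (m.+1 - s) + c`_m * pz p 1 + c`_m.+1.
Proof.
move=> km; rewrite /psum big_nat_recr; last exact: (leq_trans km (leqnSn m)).
rewrite big_nat_recr; last exact: km.
by rewrite /= subnn pz0 mulr1 subSnn.
Qed.

(* eps_k(F_{l,i}) = p^(l-i) - p^(l-i) = 0 for k <= i <= l. *)
Lemma psum_F p l k i : (k <= i <= l)%N -> psum p l k (F p l i) = 0.
Proof.
move=> kil; rewrite /F psum_addR psum_oppR psum_intR ?psum_X ?subrr //.
by case/andP: kil; apply: leq_trans.
Qed.

Local Opaque mulR psum jnd res ind addR oppR intR X F zeroR pz.

Lemma elt_ideal p k : is_ideal p k (elt k).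
Proof.
by split=> [x //||x y|x|r x]; rewrite /elt ?size_zeroR ?size_addR ?size_oppR ?size_mulR.
Qed.

Lemma gen_ideal p k A : (forall a, A a -> elt k a) -> is_ideal p k (gen p k A).
Proof.
move=> hA; split.
- by move=> x hx; apply: hx; [exact: elt_ideal | exact: hA].
- by move=> J [_ ? _ _ _].
- move=> x y hx hy J hJ hAJ; case: (hJ) => _ _ hadd _ _.
  by apply: hadd; [apply: hx | apply: hy].
- by move=> x hx J hJ hAJ; case: (hJ) => _ _ _ hopp _; apply: hopp; apply: hx.
- by move=> r x hr hx J hJ hAJ; case: (hJ) => _ _ _ _ hmul; apply: hmul => //; apply: hx.
Qed.

Lemma gen_base p k A a : A a -> gen p k A a.
Proof. by move=> h J _ hJ; apply: hJ. Qed.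

Lemma gen_min p k A J : is_ideal p k J -> (forall a, A a -> J a) ->
  forall x, gen p k A x -> J x.
Proof. by move=> hJ hA x hx; apply: hx. Qed.

Lemma zero_ideal p k : is_ideal p k (fun x => x = zeroR k).
Proof.
split=> [x ->|//|x y -> ->|x ->|r x _ ->]; first exact: size_zeroR.
- apply: (@coord_ext k); rewrite ?size_addR ?size_zeroR // => i hi.
  by rewrite nth_addR // !nth_zeroR addr0.
- apply: (@coord_ext k); rewrite ?size_oppR ?size_zeroR // => i hi.
  by rewrite nth_oppR // !nth_zeroR oppr0.
- apply: (@coord_ext k); rewrite ?size_mulR ?size_zeroR // => i hi.
  by rewrite mulR_nth // psum_zero !nth_zeroR mulr0 mul0r addr0.
Qed.

Lemma gen_zero p k A : (forall a, A a -> a = zeroR k) ->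
  forall x, gen p k A x <-> x = zeroR k.
Proof.
move=> hA x; split; first exact: (gen_min p k A _ (zero_ideal p k) hA x).
by move=> -> J [_ ? _ _ _].
Qed.

Definition Kid (p l k : nat) (x : seq int) : Prop :=
  [/\ size x = l.+1, forall i, (i < k)%N -> x`_i = 0 & psum p l k x = 0].

Lemma Kid_zero p l k : Kid p l k (zeroR l).
Proof. by split=> [|i _|]; rewrite ?size_zeroR ?nth_zeroR ?psum_zero. Qed.

Lemma Kid_psum p l k a i : (i <= k)%N -> (k <= l)%N -> Kid p l k a -> psum p l i a = 0.
Proof.
move=> ik kl [sa ha pa]; rewrite (psum_shift p l i k a ik (leqW kl)) //.
by move=> s /andP[_ hs]; apply: ha.
Qed.

(* K_{l,k} is an ideal: closure under products comes from the
   multiplicativity of eps_k and from eps_i(x) = 0 for i <= k (Kid_psum). *)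
Lemma Kid_ideal p l k : (k <= l)%N -> is_ideal p l (Kid p l k).
Proof.
move=> kl; split=> [x [] //| |x y [sx hx px] [sy hy py]|x [sx hx px]|r x _ hK].
- exact: Kid_zero.
- split=> [|i ik|]; first exact: size_addR.
    by rewrite nth_addR ?hx ?hy ?addr0 //; apply: ltnW (leq_trans ik kl).
  by rewrite psum_addR px py addr0.
- split=> [|i ik|]; first exact: size_oppR.
    by rewrite nth_oppR ?hx ?oppr0 //; apply: ltnW (leq_trans ik kl).
  by rewrite psum_oppR px oppr0.
- have [sx hx px] := hK; split=> [|i ik|]; first exact: size_mulR.
    rewrite mulR_nth ?hx ?(Kid_psum p l k x i (ltnW ik) kl hK) ?mulr0 ?mul0r ?addr0 //.
    exact: ltnW (leq_trans ik kl).
  by rewrite psum_mul px mulr0.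
Qed.

Lemma Kid_top p l x : Kid p l l x <-> x = zeroR l.
Proof.
split=> [[sx hx px]|->]; last exact: Kid_zero.
apply: (@coord_ext l) => // [|i]; first exact: size_zeroR.
rewrite leq_eqVlt nth_zeroR => /orP[/eqP->|/hx //].
by rewrite -(psum_at p).
Qed.

(* Step (1): S^k(0) = (0), since ind and jnd both map 0 to 0. *)

Lemma ind_zero k : ind k.+1 k (zeroR k) = zeroR k.+1.
Proof.
apply: (@coord_ext k.+1) => [||i hi]; rewrite ?size_ind ?size_zeroR //.
by rewrite nth_ind // !nth_zeroR if_same.
Qed.

Lemma jnd_zero p k : (0 < p)%N -> jnd p k.+1 k (zeroR k) = zeroR k.+1.
Proof.
move=> p0; have zpow e : (0 : int) ^+ (p ^ e) = 0 by rewrite expr0n expn_eq0 eqn0Ngt p0.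
apply: (@coord_ext k.+1) => [||i hi]; rewrite ?size_jnd ?size_zeroR //.
by rewrite nth_jnd // !nth_zeroR !psum_zero !zpow subrr div0z !if_same.
Qed.

Lemma Siter_zero p k : (0 < p)%N -> forall x, Siter p k x <-> x = zeroR k.
Proof.
move=> p0; elim: k => [//|k IH] x.
apply: gen_zero => a [b /IH -> [->|->]]; [exact: ind_zero | exact: jnd_zero].
Qed.

(* Step (2): L(K_{m,k}) = K_{m+1,k}, because res^{m+1}_m preserves eps_k and
   multiplies the coordinates below k by the nonzero integer p. *)
Lemma L_Kid p m k I : (0 < p)%N -> (k <= m)%N -> (forall a, I a <-> Kid p m k a) ->
  forall x, Lop p m I x <-> Kid p m.+1 k x.
Proof.
move=> p0 km hI x; have p1 : pz p 1 != 0 by rewrite pzE expr1 eqz_nat -lt0n.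
have res_low i : (i < k)%N -> (res p m.+1 m x)`_i = pz p 1 * x`_i.
  by move=> ik; rewrite nth_res ?(leq_trans ik km) ?subSnn //; apply: ltnW (leq_trans ik km).
split=> [[sx /hI [_ hy py]]|[sx hx px]]; split=> //.
- move=> i ik; have /eqP := hy i ik.
  by rewrite res_low // mulf_eq0 (negbTE p1) => /eqP.
- by rewrite -psum_res.
- apply/hI; split=> [|i ik|]; first exact: size_res.
    by rewrite res_low // hx // mulr0.
  by rewrite psum_res.
Qed.

(* Iterating from K_{k,k} = S^k(0): L^n S^k(0) = K_{k+n,k}. *)
Lemma Liter_Kid p n k : (0 < p)%N ->
  forall x, Liter p n k (Siter p k) x <-> Kid p (k + n) k x.
Proof.
move=> p0; elim: n => [|n IH] x; first by rewrite /= addn0 Kid_top (Siter_zero p k p0).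
by rewrite addnS; apply: L_Kid => //; apply: leq_addr.
Qed.

Lemma F_Kid p l k i : (k <= i < l)%N -> Kid p l k (F p l i).
Proof.
move=> /andP[ki il]; have kl := leq_trans ki (ltnW il).
split=> [|j jk|]; first exact: size_F.
  rewrite nth_F; last exact: ltnW (leq_trans jk kl).
  by rewrite (ltn_eqF (leq_trans jk ki)) (ltn_eqF (leq_trans jk kl)) mul0r subrr.
by rewrite psum_F // ki ltnW.
Qed.

Lemma Kid_vanish p l k x : (k <= l)%N -> Kid p l k x ->
  (forall i, (i < l)%N -> x`_i = 0) -> x = zeroR l.
Proof.
move=> kl [sx _ px] hx; apply/(Kid_top p); split=> //.
by rewrite -(psum_shift p l k l x kl (leqnSn l)) // => s /andP[_ /hx].
Qed.

Lemma Kid_eliminate p l k j x : (k <= j < l)%N -> Kid p l k x ->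
  (forall i, (i < j)%N -> x`_i = 0) ->
  exists2 y, Kid p l k y /\ (forall i, (i <= j)%N -> y`_i = 0)
           & x = addR l y (mulR p l (intR l x`_j) (F p l j)).
Proof.
move=> /andP[kj jl] hK hx; have kl := leq_trans kj (ltnW jl).
have [_ _ Kadd _ Kmul] := Kid_ideal p l k kl.
set y := addR l x (mulR p l (intR l (- x`_j)) (F p l j)).
have ey i : (i <= l)%N -> y`_i = x`_i - x`_j * (F p l j)`_i.
  by move=> il; rewrite /y nth_addR // nth_mulR_intR // mulNr.
exists y; first split.
- by apply: Kadd => //; apply: Kmul; [exact: size_intR | apply: F_Kid; rewrite kj jl].
- move=> i ij; have il := leq_trans ij (ltnW jl).
  rewrite ey // nth_F // (ltn_eqF (leq_ltn_trans ij jl)) mul0r subr0.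
  case: ltngtP ij => // [/hx->|->] _; first by rewrite mulr0 subrr.
  by rewrite mulr1 subrr.
- apply: (@coord_ext l); [by case: hK | exact: size_addR | move=> i il].
  by rewrite nth_addR // nth_mulR_intR // ey // subrK.
Qed.

(* Any ideal containing F_{l,k}, ..., F_{l,l-1} contains K_{l,k}: eliminate
   the coordinates k, k+1, ..., l-1 in turn. *)
Lemma Kid_gen_F p l k J : (k <= l)%N -> is_ideal p l J ->
  (forall i, (k <= i < l)%N -> J (F p l i)) -> forall x, Kid p l k x -> J x.
Proof.
move=> kl hJ hF; have [_ J0 Jadd _ Jmul] := hJ.
suff H n : (n <= l - k)%N -> forall x, Kid p l k x ->
    (forall i, (i < l - n)%N -> x`_i = 0) -> J x.
  by move=> x hx; apply: (H (l - k)%N) => //; rewrite subKn //; case: hx.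
elim: n => [|n IH] hn x hx hz.
  by rewrite (Kid_vanish p l k x kl hx) // => i; rewrite -[l]subn0; apply: hz.
have hj : (k <= l - n.+1 < l)%N by apply/andP; split; lia.
have [y [hy yz] ->] := Kid_eliminate p l k (l - n.+1) x hj hx hz.
apply: Jadd; first by apply: (IH (ltnW hn)) => // i hi; apply: yz; lia.
by apply: Jmul; [exact: size_intR | apply: hF].
Qed.

Lemma intR0 l : intR l 0 = zeroR l.
Proof.
apply: (@coord_ext l) => [||i hi]; rewrite ?size_intR ?size_zeroR //.
by rewrite nth_intR // nth_zeroR if_same.
Qed.

(* Step (3) concluded: J_{l,k}(0) = K_{l,k} (for k = l both are (0)). *)
Lemma Jid_Kid p l k : (0 < l)%N -> (k <= l)%N ->
  forall x, Jid p l k 0 x <-> Kid p l k x.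
Proof.
move=> l0 kl x; rewrite /Jid; case: (ltngtP k l) kl => // [klt|->] _; last first.
  have -> : (l <= l.-1)%N = false by rewrite -ltnS prednK // ltnn.
  rewrite Kid_top /=.
  by apply: gen_zero => a ->; exact: intR0.
have -> : (k <= l.-1)%N by rewrite -ltnS prednK.
rewrite l0 /=.
set A := fun y => _ \/ _.
have hA a : A a -> elt l a by move=> [->|[i _ ->]]; [exact: size_intR | exact: size_F].
split.
  apply: (gen_min p l A _ (Kid_ideal p l k (ltnW klt))) => a [->|[i hi ->]].
    by rewrite intR0; exact: Kid_zero.
  exact: F_Kid.
apply: (Kid_gen_F p l k _ (ltnW klt) (gen_ideal p l A hA)) => i hi.
by apply: gen_base; right; exists i.
Qed.

(* Step (4).  Two divisibilities behind the integrality of jnd: Fermat's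
   little theorem, and p d | (y + t)^p - y^p whenever p | d and d | t. *)
Lemma fermat_int (p : nat) (a : int) : prime p -> (p%:Z %| a ^+ p - a)%Z.
Proof.
move=> hp; rewrite -eqz_mod_dvd; apply/eqP.
have p0 : (p%:Z != 0) by rewrite eqz_nat -lt0n prime_gt0.
have := modz_ge0 a p0.
rewrite -modzXm -[in RHS](modz_mod a).
case: (a %% p)%Z => // n _.
rewrite -natz -natrX natz !modz_nat natz modz_nat; congr Posz; exact: fermat_little.
Qed.

Lemma binom_dvd (p : nat) (d y t : int) : prime p -> (p%:Z %| d)%Z -> (d %| t)%Z ->
  (p%:Z * d %| (y + t) ^+ p - y ^+ p)%Z.
Proof.
move=> hp pd dt.
rewrite exprDn big_ord_recl /= subn0 expr0 mulr1 bin0 mulr1n addrAC subrr add0r.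
rewrite -/(dvdz _ _); apply: rpred_sum => i _.
rewrite /bump /= add1n -mulr_natr.
case: (ltngtP i.+1 p) (ltn_ord i) => // [hlt|heq] _.
  have [q ->] : exists q, 'C(p, i.+1) = (q * p)%N.
    by apply/dvdnP; apply: prime_dvd_bin; rewrite ?hlt.
  have -> : y ^+ (p - i.+1) * t ^+ i.+1 * (q * p)%N%:R
     = (p%:Z) * (t * (y ^+ (p - i.+1) * t ^+ i * q%:R)).
    by rewrite natrM exprS natz; ring.
  by apply: dvdz_mul => //; apply: dvdz_mulr.
rewrite heq subnn binn expr0 mul1r mulr1.
have -> : t ^+ p = t ^+ p.-1 * t by rewrite -exprSr prednK ?prime_gt0.
apply: dvdz_mul => //; apply: dvdz_exp; last exact: dvdz_trans pd dt.
by rewrite -subn1 subn_gt0 prime_gt1.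
Qed.

(* ind^{m+1}_m maps K_{m,k} into K_{m+1,k}, since eps_k(ind a) = p eps_k(a). *)
Lemma ind_Kid p m k a : (k <= m)%N -> Kid p m k a -> Kid p m.+1 k (ind m.+1 m a).
Proof.
move=> km [sa ha pa]; split=> [|i ik|]; first exact: size_ind.
  by rewrite nth_ind ?(leq_trans (ltnW ik) km) ?ha //; apply: leqW (leq_trans (ltnW ik) km).
by rewrite psum_ind // pa mulr0.
Qed.

(* The coordinates of jnd^{m+1}_m a below m, multiplied back by their
   denominators, telescope: writing P_s = eps_s(a), they are P_s^p - P_{s+1}^p. *)
Lemma jnd_coord_low p m a s : prime p -> (s < m)%N ->
  (jnd p m.+1 m a)`_s * pz p (m.+1 - s) = psum p m s a ^+ p - psum p m s.+1 a ^+ p.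
Proof.
move=> hp sm; have sm' := ltnW sm.
rewrite nth_jnd; last exact: leqW sm'.
rewrite (ltn_eqF (ltn_trans sm (ltnSn m))) leqNgt sm /= subSnn expn1 divzK //.
rewrite (psum_rec p m s a sm') [a`_s * _ + _]addrC.
have -> : pz p (m.+1 - s) = p%:Z * pz p (m - s) by rewrite !pzE (subSn sm') exprS.
apply: binom_dvd => //; last exact: dvdz_mull.
by rewrite pzE; apply: dvdz_exp; [rewrite subn_gt0 | apply: dvdzz].
Qed.

(* eps_k(jnd a) = eps_k(a)^p: the telescoping sum, Fermat for the coordinate
   m, and the top coordinate a_m. *)
Lemma psum_jnd p m k a : prime p -> (k <= m)%N ->
  psum p m.+1 k (jnd p m.+1 m a) = psum p m k a ^+ p.
Proof.
move=> hp km; rewrite psum_split2 //.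
rewrite (@telescope_sumr_eq _ k m (fun s => - psum p m s a ^+ p)) //; last first.
  by move=> s /andP[_ sm]; rewrite jnd_coord_low // opprK addrC.
rewrite opprK psum_at.
rewrite nth_jnd // (ltn_eqF (ltnSn m)) leqnn subSnn subnn expn1 expn0 expr1.
rewrite divzK; last by rewrite pzE expr1; apply: fermat_int.
rewrite nth_jnd // eqxx; ring.
Qed.

Lemma jnd_Kid p m k a : prime p -> (k <= m)%N -> Kid p m k a ->
  Kid p m.+1 k (jnd p m.+1 m a).
Proof.
move=> hp km hK; have [_ _ pa] := hK.
split=> [|i ik|]; first exact: size_jnd.
  have im : (i < m)%N := leq_trans ik km.
  rewrite nth_jnd; last exact: leqW (ltnW im).
  rewrite (ltn_eqF (ltn_trans im (ltnSn m))) leqNgt im /=.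
  by rewrite !(Kid_psum p m k a) ?subrr ?div0z // ltnW.
by rewrite psum_jnd // pa expr0n (gtn_eqF (prime_gt0 hp)).
Qed.

Lemma F_step p m i : (i < m)%N ->
  F p m.+1 i = addR m.+1 (ind m.+1 m (F p m i))
                 (mulR p m.+1 (intR m.+1 (pz p (m - i))) (F p m.+1 m)).
Proof.
move=> im; apply: (@coord_ext m.+1) => [||j jm]; rewrite ?size_F ?size_addR //.
rewrite nth_addR // nth_mulR_intR //.
have hpz : pz p (m.+1 - i) = pz p (m - i) * pz p 1.
  by rewrite !pzE (subSn (ltnW im)) exprS expr1 mulrC.
rewrite nth_ind // (nth_F p m.+1 i j jm) (nth_F p m.+1 m j jm) subSnn.
case: (ltngtP j m.+1) jm => // [jlt|->] _.
  have jm' : (j <= m)%N by [].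
  by rewrite jm' (nth_F p m i j jm') /=; ring.
by rewrite (gtn_eqF (ltn_trans im (ltnSn m))) (gtn_eqF (ltnSn m)) ltnn hpz /=; ring.
Qed.

(* F_{n+2,n+1} = jnd F_{n+1,n} + q ind F_{n+1,n} with q = (-p)^(p-2),
   coordinatewise.  For a = F_{n+1,n} one has eps_n(a) = 0 and
   eps_{n+1}(a) = a_{n+1} = -p, and (-p)^p = q p^2. *)
Lemma nth_F_top p n j : prime p -> (j <= n.+2)%N ->
  (F p n.+2 n.+1)`_j = (jnd p n.+2 n.+1 (F p n.+1 n))`_j
     + ((- p%:Z) ^+ (p - 2)) * (ind n.+2 n.+1 (F p n.+1 n))`_j.
Proof.
move=> hp jm.
set a := F p n.+1 n; set q := (- p%:Z) ^+ (p - 2).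
have pp0 : p%:Z != 0 by rewrite eqz_nat -lt0n prime_gt0.
have hq : (- p%:Z) ^+ p = q * p%:Z ^+ 2.
  by rewrite /q -(sqrrN (p%:Z)) -exprD subnK ?prime_gt1.
have pz1 : pz p 1 = p%:Z by rewrite pzE expr1.
have ka : Kid p n.+1 n a by apply: F_Kid; rewrite leqnn ltnSn.
have a_top : a`_n.+1 = - p%:Z.
  by rewrite /a nth_F // (gtn_eqF (ltnSn n)) eqxx subSnn pz1 mul1r sub0r.
have a_n : a`_n = 1 by rewrite /a nth_F // eqxx (ltn_eqF (ltnSn n)) mul0r subr0.
have [_ a_low Pn] := ka.
rewrite nth_jnd // nth_ind // nth_F //.
case: (ltngtP j n.+2) jm => // [jlt|->] _; last first.
  by rewrite (gtn_eqF (ltnSn n.+1)) ltnn a_top subSnn pz1 /=; ring.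
case: (ltngtP j n.+1) => [jlt'|jgt|->]; [|lia|]; last first.
  rewrite subSnn subnn expn1 expn0 expr1 a_top pz1 hq /=.
  rewrite (_ : q * p%:Z ^+ 2 - - p%:Z = (q * p%:Z + 1) * p%:Z); last by ring.
  by rewrite mulzK //; ring.
rewrite subSnn expn1.
case: (ltngtP j n) => [jn|jgt|->]; [|lia|]; last first.
  rewrite Pn psum_at a_top hq expr0n (gtn_eqF (prime_gt0 hp)) a_n /=.
  rewrite (_ : (n.+2 - n = 2)%N); last by rewrite -addn2 addKn.
  rewrite pzE (_ : 0 - q * p%:Z ^+ 2 = (- q) * p%:Z ^+ 2); last by ring.
  by rewrite mulzK ?expf_neq0 //; ring.
by rewrite !(Kid_psum p n.+1 n a) ?leqW // [X in (X %/ _)%Z]subrr div0z a_low // mulr0.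
Qed.

Lemma F_top p m : prime p -> (0 < m)%N ->
  F p m.+1 m = addR m.+1 (jnd p m.+1 m (F p m m.-1))
    (mulR p m.+1 (intR m.+1 ((- p%:Z) ^+ (p - 2))) (ind m.+1 m (F p m m.-1))).
Proof.
case: m => [//|n] hp _; apply: (@coord_ext n.+2) => [||j hj]; rewrite ?size_F ?size_addR //.
by rewrite nth_addR // nth_mulR_intR // nth_F_top.
Qed.

Section SOfKid.

Variables (p m k : nat) (I : seq int -> Prop).
Hypotheses (hp : prime p) (km : (k < m)%N) (hI : forall a, I a <-> Kid p m k a).

Let A : seq int -> Prop :=
  fun y => exists2 a, I a & y = ind m.+1 m a \/ y = jnd p m.+1 m a.

Let S_ideal : is_ideal p m.+1 (Sop p m I).
Proof.
by apply: gen_ideal => y [a _ [->|->]]; [exact: size_ind | exact: size_jnd].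
Qed.

Lemma S_Kid_sub x : Sop p m I x -> Kid p m.+1 k x.
Proof.
apply: (gen_min p m.+1 A _ (Kid_ideal p m.+1 k (leqW (ltnW km)))).
move=> y [a /hI ha [->|->]]; first exact: (ind_Kid p m k a (ltnW km) ha).
exact: (jnd_Kid p m k a hp (ltnW km) ha).
Qed.

Lemma F_in_S i : (k <= i <= m)%N -> Sop p m I (F p m.+1 i).
Proof.
have [_ _ Sadd _ Smul] := S_ideal.
have gI a : Kid p m k a -> Sop p m I (ind m.+1 m a).
  by move=> ha; apply: gen_base; exists a; [apply/hI | left].
have gJ a : Kid p m k a -> Sop p m I (jnd p m.+1 m a).
  by move=> ha; apply: gen_base; exists a; [apply/hI | right].
have Fm : Sop p m I (F p m.+1 m).
  have m0 : (0 < m)%N := leq_ltn_trans (leq0n k) km.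
  have ka : Kid p m k (F p m m.-1) by apply: F_Kid; rewrite ltn_predL m0 andbT -ltnS prednK.
  rewrite F_top //; apply: Sadd; first exact: gJ.
  by apply: Smul; [exact: size_intR | exact: gI].
move=> /andP[ki im]; case: (ltngtP i m) im => // [iltm|->] _; last exact: Fm.
rewrite F_step //; apply: Sadd; first by apply: gI; apply: F_Kid; rewrite ki iltm.
by apply: Smul; [exact: size_intR | exact: Fm].
Qed.

Lemma S_Kid x : Sop p m I x <-> Kid p m.+1 k x.
Proof.
split; first exact: S_Kid_sub.
apply: (Kid_gen_F p m.+1 k _ (leqW (ltnW km)) S_ideal) => i /andP[ki im].
by apply: F_in_S; rewrite ki.
Qed.

End SOfKid.

Theorem proposition6 (p r : nat) (hp : prime p) :
  [/\ (forall k : nat, (k <= r)%N ->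
         same_ideal (Siter p k) (fun x => x = zeroR k)),
      (forall l k : nat, (1 <= l <= r)%N -> (k <= l)%N ->
         same_ideal (Liter p (l - k) k (Siter p k)) (Jid p l k 0)) &
      (forall l k : nat, (1 <= l <= r)%N -> (k + 2 <= l)%N ->
         same_ideal (Sop p (l - 1) (Liter p (l - k - 1) k (Siter p k)))
                    (Liter p (l - k) k (Siter p k)))].
Proof.
have p0 := prime_gt0 hp.
have LK l k x : (k <= l)%N -> Liter p (l - k) k (Siter p k) x <-> Kid p l k x.
  by move=> kl; rewrite (Liter_Kid p (l - k) k p0) subnKC.
split=> [k _ x | l k /andP[l0 _] kl x | l k _ kl x].
- exact: Siter_zero.
- by rewrite LK // Jid_Kid.
- have km : (k < l - 1)%N by lia.
  have hI a : Liter p (l - k - 1) k (Siter p k) a <-> Kid p (l - 1) k a.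
    by rewrite -subnDA addnC subnDA LK // ltnW.
  have l1 : (l - 1).+1 = l by lia.
  by rewrite (S_Kid p (l - 1) k _ hp km hI) l1 LK //; lia.
Qed.
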